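(* Let $p$ be a prime, $n\ge1$, $\mathbb{F}=\mathbb{F}_{p^n}$, $F=p^n$, and $g:\mathbb{F}\to[0,1]$. Let $k\ge 2$ be an integer, let $n'$ be an integer with $$1+\frac{\log\binom{k}{2}}{\log p}\ \le\ n'\ <\ 2+\frac{\log\binom{k}{2}}{\log p},\qquad n'\le n,$$ and let $S$ be the set of all $\mathbb{F}_p$-subspaces of $\mathbb{F}$ of dimension $n'$. If $\mathbb{E}(g)>8p^{-1/2}k^{-1}$, then when $t\in\mathbb{F}$ and $W\in S$ are chosen independently and uniformly at random, $$\sum_{m\in t+W}g(m)\ \ge\ \mathbb{E}(g)\,|W|/2$$ holds with probability exceeding $3/4$.
   Context: $\mathbb{E}(g)=F^{-1}\sum_{m\in\mathbb{F}}g(m)$. *)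

From HB Require Import structures.
From mathcomp Require Import all_boot all_order all_algebra all_field.
From mathcomp Require Import reals exp.
Set Implicit Arguments. Unset Strict Implicit. Unset Printing Implicit Defensive.
Import Order.TTheory GRing.Theory Num.Theory.
Local Open Scope ring_scope.

Definition expect (R : realType) (F : finType) (g : F -> R) : R :=
  (#|F|%:R)^-1 * \sum_(m : F) g m.

(* The set of F_p-subspaces of F (F viewed as an F_p-vector space through
   pPrimeCharType) of dimension d, each represented by its set of elements.
   A set A of elements is a subspace iff it coincides with the F_p-span of
   its own elements. *)
Definition Fp_subspaces (F : finFieldType) (p : nat) (hp : p \in [pchar F])
    (d : nat) : {set {set F}} :=
  [set A : {set F} |
     [forall x : F, (x \in A) == (x \in (@span _ (pPrimeCharType hp) (enum A)))]
     && (\dim (@span _ (pPrimeCharType hp) (enum A)) == d)].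

Definition translate (F : finFieldType) (t : F) (W : {set F}) : {set F} :=
  [set t + w | w in W].

Definition prob_tW (R : realType) (F : finType) (S : {set {set F}})
    (P : F -> {set F} -> bool) : R :=
  (#|[set tW in setX [set: F] S | P tW.1 tW.2]|%:R) / ((#|F| * #|S|)%N%:R).

From HB Require Import structures.
From mathcomp Require Import all_boot all_order all_algebra all_field.
From mathcomp Require Import reals exp.
From mathcomp Require Import ring lra zify.
Set Implicit Arguments. Unset Strict Implicit. Unset Printing Implicit Defensive.
Import Order.TTheory GRing.Theory Num.Theory.
Local Open Scope ring_scope.

(* A second-moment argument.  For an additive subgroup W of size q, the window
   sums X_t = sum_(w in W) g (t + w) have mean q E(g) over t, and their squared
   deviations add up to q sum_(d in W) A(d) - q^2 E(g) sum g, where A is the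
   autocorrelation of g.  Scaling by a nonzero element of F permutes the
   F_p-subspaces of dimension n', so all nonzero d lie in equally many of them;
   double counting bounds that number by |S| q / |F|, and averaging over W
   bounds the total squared deviation by q |S| sum g.  Chebyshev then leaves at
   most 4 |F| |S| / (q E(g)) bad pairs (t, W), and the hypotheses on n' and
   E(g) force q E(g) > 16. *)

Section Expectation.
Variables (R : realType) (T : finType) (g : T -> R).
Hypothesis g01 : forall x, 0 <= g x <= 1.

Lemma card_mul_expect (x0 : T) : #|T|%:R * expect g = \sum_t g t.
Proof.
by rewrite /expect mulrA mulfV ?mul1r // pnatr_eq0 -lt0n; apply/card_gt0P; exists x0.
Qed.

Lemma expect_le1 : expect g <= 1.
Proof.
rewrite /expect; have [->|T0] := posnP #|T|; first by rewrite invr0 mul0r ler01.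
rewrite ler_pdivrMl ?ltr0n // mulr1 -sum1_card natr_sum.
by apply: ler_sum => t _; case/andP: (g01 t).
Qed.

End Expectation.

Section Autocorrelation.
Variables (R : realType) (V : finZmodType) (g : V -> R).

Definition autocorr (d : V) : R := \sum_t g t * g (t + d).

Lemma sum_autocorr : \sum_d autocorr d = (\sum_t g t) ^+ 2.
Proof.
rewrite exchange_big expr2 mulr_suml; apply: eq_bigr => t _.
rewrite -mulr_sumr; congr (_ * _).
by rewrite [RHS](reindex_inj (addrI t)).
Qed.

Lemma sum_shift (w : V) : \sum_t g (t + w) = \sum_t g t.
Proof. by rewrite [RHS](reindex_inj (addIr w)). Qed.

Lemma sum_translates (W : {set V}) :
  \sum_t \sum_(w in W) g (t + w) = #|W|%:R * \sum_t g t.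
Proof.
by rewrite exchange_big (eq_bigr _ (fun w _ => sum_shift w)) sumr_const mulr_natl.
Qed.

Lemma autocorr0_bound : (forall x, 0 <= g x <= 1) -> 0 <= autocorr 0 <= \sum_t g t.
Proof.
move=> g01; rewrite /autocorr; apply/andP; split.
  by apply: sumr_ge0 => t _; rewrite addr0; case/andP: (g01 t) => g0 _; apply: mulr_ge0.
by apply: ler_sum => t _; rewrite addr0; case/andP: (g01 t) => g0 g1; rewrite ler_piMr.
Qed.

Variable W : {set V}.
Hypothesis addW : {in W &, forall x y, x + y \in W}.

Lemma imset_addr_closed (w : V) : w \in W -> [set x + w | x in W] = W.
Proof.
move=> wW; apply/eqP; rewrite eqEcard card_imset ?leqnn ?andbT; last exact: addIr.
by apply/subsetP => _ /imsetP[x xW ->]; apply: addW.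
Qed.

Lemma sum_sqr_translates :
  \sum_t (\sum_(w in W) g (t + w)) ^+ 2 = #|W|%:R * \sum_(d in W) autocorr d.
Proof.
under eq_bigr do rewrite expr2 big_distrlr /=.
rewrite exchange_big /=.
under eq_bigr do rewrite exchange_big /=.
rewrite mulr_natl -sumr_const; apply: eq_bigr => w wW.
rewrite -{1}(imset_addr_closed wW) big_imset /=; last by move=> x y _ _; apply: addIr.
apply: eq_bigr => x _; rewrite /autocorr [RHS](reindex_inj (addIr w)) /=.
by apply: eq_bigr => t _; rewrite (addrC x) addrA.
Qed.

Lemma sum_sqr_dev_translates :
  \sum_t (\sum_(w in W) g (t + w) - #|W|%:R * expect g) ^+ 2 =
  #|W|%:R * (\sum_(d in W) autocorr d - #|W|%:R * expect g * \sum_t g t).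
Proof.
set c := #|W|%:R * expect g.
have sqr_dev t : (\sum_(w in W) g (t + w) - c) ^+ 2 =
    (\sum_(w in W) g (t + w)) ^+ 2 - 2 * c * \sum_(w in W) g (t + w) + c ^+ 2.
  by ring.
rewrite (eq_bigr _ (fun t _ => sqr_dev t)) big_split sumrB /= -mulr_sumr.
rewrite sum_sqr_translates sum_translates sumr_const -(card_mul_expect g 0).
rewrite (_ : #|xpredT| = #|V|) // -[c ^+ 2 *+ _]mulr_natl /c; ring.
Qed.

End Autocorrelation.

Section Subspaces.
Variables (F : finFieldType) (p : nat) (hp : p \in [pchar F]) (d : nat).
Local Notation S := (Fp_subspaces hp d).

Lemma Fp_subspacesP (A : {set F}) :
  A \in S <-> [/\ 0 \in A, {in A &, forall x y, x + y \in A} & #|A| = (p ^ d)%N].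
Proof.
have p_prime := pcharf_prime hp.
set U := @span _ (pPrimeCharType hp) (enum A).
have cardU : #|U| = (p ^ \dim U)%N by rewrite card_vspace card_Fp.
split=> [|[A0 addA cardA]].
  rewrite inE => /andP[/forallP memA /eqP dimU].
  have AU x : (x \in A) = (x \in U) by apply/eqP.
  split; first by rewrite AU; exact: mem0v.
  - by move=> x y; rewrite !AU; apply: memvD.
  - by rewrite -dimU -cardU; apply: eq_card => x; rewrite AU.
have mulrnA x m : x \in A -> x *+ m \in A.
  by move=> xA; elim: m => [|m IH]; rewrite ?mulr0n // mulrS addA.
have AU x : (x \in A) = (x \in U).
  apply/idP/idP => [xA|/coord_span->]; first by apply: memv_span; rewrite mem_enum.
  apply: (big_ind (fun x => x \in A)) => [//|y z|i _]; first exact: addA.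
  rewrite /GRing.scale /= /pprimeChar_scale mulr_natl; apply: mulrnA.
  by rewrite -mem_enum mem_nth // -cardE.
rewrite inE; apply/andP; split; first by apply/forallP => x; rewrite AU.
rewrite -(@eqn_exp2l p) ?prime_gt1 // -cardA -cardU.
by apply/eqP/eq_card => x; rewrite AU.
Qed.

Lemma card_Fp_subspaces_gt0 (n : nat) :
  #|F| = (p ^ n)%N -> (d <= n)%N -> (0 < #|S|)%N.
Proof.
move=> cardF le_dn; have p_prime := pcharf_prime hp.
pose vT := pPrimeCharType hp.
have dimF : \dim (fullv : {vspace vT}) = n.
  have := card_vspace (fullv : {vspace vT}); rewrite card_Fp // card_vspacef cardF.
  by move/eqP; rewrite eqn_exp2l ?prime_gt1 // => /eqP.
pose b := vbasis (fullv : {vspace vT}).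
have free_b : free (take d b).
  by apply: (@catl_free _ _ (drop d b)); rewrite cat_take_drop; exact: basis_free (vbasisP _).
pose U := <<take d b>>%VS.
have dimU : \dim U = d.
  by move: free_b => /eqP->; rewrite size_take size_tuple dimF; case: ltngtP le_dn.
apply/card_gt0P; exists [set x : F | x \in U]; apply/Fp_subspacesP; split.
- by rewrite inE; exact: mem0v.
- by move=> x y; rewrite !inE; apply: memvD.
- have := card_vspace U; rewrite card_Fp // dimU => <-.
  by apply: eq_card => x; rewrite inE.
Qed.

Lemma Fp_subspaces_scale (c : F) (A : {set F}) :
  c != 0 -> A \in S -> [set c * x | x in A] \in S.
Proof.
move=> c0 /Fp_subspacesP[A0 addA cardA]; apply/Fp_subspacesP; split.
- by apply/imsetP; exists 0; rewrite ?mulr0.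
- move=> _ _ /imsetP[x xA ->] /imsetP[y yA ->].
  by apply/imsetP; exists (x + y); rewrite ?addA ?mulrDr.
- by rewrite card_imset //; exact: mulfI.
Qed.

Lemma card_subspaces_mem_le (a b : F) : a != 0 -> b != 0 ->
  (#|[set W in S | a \in W]| <= #|[set W in S | b \in W]|)%N.
Proof.
move=> a0 b0; have ba0 : b / a != 0 by rewrite mulf_neq0 ?invr_eq0.
rewrite -(card_imset _ (imset_inj (mulfI ba0))); apply/subset_leq_card/subsetP.
move=> _ /imsetP[W /setIdP[WS aW] ->]; rewrite inE Fp_subspaces_scale //=.
by apply/imsetP; exists a; rewrite ?divfK.
Qed.

Lemma card_subspaces_mem_eq (a b : F) : a != 0 -> b != 0 ->
  #|[set W in S | a \in W]| = #|[set W in S | b \in W]|.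
Proof. by move=> a0 b0; apply/eqP; rewrite eqn_leq !card_subspaces_mem_le. Qed.

Lemma sum_card_subspaces_mem :
  \sum_(a | a != 0) #|[set W in S | a \in W]| = (#|S| * (p ^ d - 1))%N.
Proof.
have countW a : #|[set W in S | a \in W]| = \sum_(W in S) (a \in W : nat).
  by rewrite -sum1_card (eq_bigl _ _ (fun W => in_set _ W)) big_mkcondr.
rewrite (eq_bigr _ (fun a _ => countW a)) exchange_big -sum_nat_const.
apply: eq_bigr => W /Fp_subspacesP[W0 _ <-].
rewrite (cardsD1 0 W) W0 add1n subSS subn0 -sum1_card.
by rewrite (eq_bigl _ _ (fun a => in_setD1 a W 0)) big_mkcondr.
Qed.

Lemma card_subspaces_mem (a : F) : a != 0 ->
  (#|[set W in S | a \in W]| * (#|F| - 1))%N = (#|S| * (p ^ d - 1))%N.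
Proof.
move=> a0; rewrite -sum_card_subspaces_mem.
rewrite (eq_bigr _ (fun b b0 => card_subspaces_mem_eq b0 a0)).
by rewrite sum_nat_const cardC1 subn1 mulnC.
Qed.

Lemma card_subspaces_mem_leq (a : F) : a != 0 ->
  (#|[set W in S | a \in W]| * #|F| <= #|S| * p ^ d)%N.
Proof.
move=> a0; have := card_subspaces_mem a0.
have N_le_S : (#|[set W in S | a \in W]| <= #|S|)%N.
  by apply/subset_leq_card/subsetP => W /setIdP[].
have F_gt0 : (0 < #|F|)%N by apply/card_gt0P; exists 0.
have q_gt0 : (0 < p ^ d)%N by rewrite expn_gt0 prime_gt0 // (pcharf_prime hp).
nia.
Qed.

Lemma sum_subspaces_sum_mem (R : realType) (f : F -> R) :
  \sum_(W in S) \sum_(x in W) f x =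
  #|S|%:R * f 0 + #|[set W in S | 1 \in W]|%:R * (\sum_x f x - f 0).
Proof.
have splitW W : W \in S ->
    \sum_(x in W) f x = f 0 + \sum_(x | x != 0) (if x \in W then f x else 0).
  case/Fp_subspacesP => W0 _ _; rewrite (bigD1 0) //= -big_mkcondr.
  by congr (_ + _); apply: eq_bigl => x; rewrite andbC.
rewrite (eq_bigr _ splitW) big_split sumr_const /= exchange_big mulr_natl.
congr (_ + _); rewrite [X in _ * (X - _)](bigD1 0) //= addrC addrK mulr_sumr.
apply: eq_bigr => x x0; rewrite -big_mkcondr /= (card_subspaces_mem_eq (oner_neq0 F) x0).
by rewrite mulr_natl -sumr_const; apply: eq_bigl => W; rewrite inE.
Qed.

Lemma sum_subspaces_sqr_dev_le (R : realType) (g : F -> R) :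
  (forall x, 0 <= g x <= 1) ->
  \sum_(W in S) \sum_t (\sum_(w in W) g (t + w) - (p ^ d)%:R * expect g) ^+ 2
    <= (p ^ d)%:R * expect g * (#|F| * #|S|)%:R.
Proof.
move=> g01; set q : R := (p ^ d)%:R; set m := expect g.
have devW W : W \in S -> \sum_t (\sum_(w in W) g (t + w) - q * m) ^+ 2 =
    q * (\sum_(x in W) autocorr g x - q * m * \sum_t g t).
  by case/Fp_subspacesP => _ addW cardW; rewrite /q -cardW sum_sqr_dev_translates.
rewrite (eq_bigr _ devW) -mulr_sumr sumrB sum_subspaces_sum_mem sum_autocorr sumr_const.
rewrite -(card_mul_expect g 0) -/m -[q * m * _ *+ _]mulr_natr natrM.
rewrite -[q * m * (_%:R * _%:R)]mulrA.
apply: ler_wpM2l; first exact: ler0n.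
have [A0_ge0 A0_le] := andP (autocorr0_bound g01).
rewrite -(card_mul_expect g 0) -/m in A0_le.
have := card_subspaces_mem_leq (oner_neq0 F); rewrite -(ler_nat R) !natrM -/q.
have : 0 <= #|F|%:R * m ^+ 2 by rewrite mulr_ge0 ?ler0n ?sqr_ge0.
have := ler0n R #|S|; have := ler0n R #|[set W in S | 1 \in W]|.
nra.
Qed.

Lemma sum_translate (R : realType) (f : F -> R) (t : F) (W : {set F}) :
  \sum_(x in translate t W) f x = \sum_(w in W) f (t + w).
Proof. by rewrite big_imset //= => x y _ _; apply: addrI. Qed.

End Subspaces.

Lemma mul_bin2_leq_expn (R : realType) (p k n : nat) : prime p -> (2 <= k)%N ->
  1 + ln ('C(k, 2)%:R : R) / ln (p%:R : R) <= n%:R -> (p * 'C(k, 2) <= p ^ n)%N.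
Proof.
move=> p_prime k_ge2 n_ge.
have p_gt0 : (0 : R) < p%:R by rewrite ltr0n prime_gt0.
have lnp_gt0 : 0 < ln (p%:R : R) by rewrite ln_gt0 // ltr1n prime_gt1.
have C_gt0 : (0 : R) < 'C(k, 2)%:R by rewrite ltr0n bin_gt0.
rewrite -(ler_nat R) -ler_ln ?posrE ?natrM ?natrX ?mulr_gt0 ?exprn_gt0 //.
rewrite lnM ?posrE // lnXn // -[ln _ *+ _]mulr_natl.
by move: n_ge; rewrite -(ler_pM2r lnp_gt0) mulrDl mul1r divfK ?gt_eqF // addrC.
Qed.

Lemma translate_mass_gt16 (R : realType) (p k : nat) (q m : R) :
  prime p -> (2 <= k)%N -> (p * 'C(k, 2))%:R <= q -> m <= 1 ->
  8 / (Num.sqrt (p%:R : R) * k%:R) < m -> 16 < q * m.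
Proof.
move=> p_prime k_ge2 q_ge m_le1.
set sp := Num.sqrt (p%:R : R); set K : R := k%:R.
have sp_gt0 : 0 < sp by rewrite sqrtr_gt0 ltr0n prime_gt0.
have K_ge2 : 2 <= K by rewrite ler_nat.
have sp2 : sp * sp = p%:R by rewrite -expr2 sqr_sqrtr ?ler0n.
have bin2K : 2 * 'C(k, 2)%:R = K * (K - 1) :> R.
  have := mul_bin_diag k 1; rewrite bin1 => /(congr1 (fun n => n%:R : R)).
  by rewrite !natrM /K -subn1 natrB ?(leq_trans _ k_ge2).
have spK_gt0 : 0 < sp * K by rewrite mulr_gt0 ?(lt_le_trans _ K_ge2).
rewrite ltr_pdivrMr // => m_gt.
rewrite natrM -sp2 in q_ge.
(* [m <= 1] is what makes [sqrt p * k] large, and then [sqrt p * (k - 1)] too. *)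
have spK_gt8 : 8 < sp * K by nra.
have spK1_gt4 : 4 < sp * (K - 1) by nra.
have m_gt0 : 0 < m by nra.
have : sp * sp * 'C(k, 2)%:R * m <= q * m by rewrite ler_pM2r.
have : 2 * (sp * sp * 'C(k, 2)%:R * m) = (m * (sp * K)) * (sp * (K - 1)).
  transitivity (sp * sp * m * (2 * 'C(k, 2)%:R)); first by ring.
  by rewrite bin2K; ring.
nra.
Qed.

Section Counting.
Variables (R : realType) (T : finType) (A : {set T}) (P : pred T).

Lemma markov_card_le (f : T -> R) (c : R) :
  {in A, forall x, 0 <= f x} -> {in A, forall x, ~~ P x -> c <= f x} ->
  #|[set x in A | ~~ P x]|%:R * c <= \sum_(x in A) f x.
Proof.
move=> f_ge0 c_le; rewrite mulr_natl -sumr_const big_mkcond [X in _ <= X]big_mkcond.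
apply: ler_sum => x _; rewrite inE; case: ifPn => [/andP[xA nPx]|_].
  by rewrite xA; apply: c_le.
by case: ifP => // xA; apply: f_ge0.
Qed.

Lemma ratio_gt3_4 : (4 * #|[set x in A | ~~ P x]| < #|A|)%N ->
  3 / 4 < #|[set x in A | P x]|%:R / #|A|%:R :> R.
Proof.
have := cardsID [set x | P x] A.
have -> : A :&: [set x | P x] = [set x in A | P x] by apply/setP => x; rewrite !inE.
have -> : A :\: [set x | P x] = [set x in A | ~~ P x] by apply/setP => x; rewrite !inE andbC.
move=> cardA bad_small; have A_gt0 : (0 < #|A|)%N by lia.
rewrite ltr_pdivlMr ?ltr0n // mulrAC ltr_pdivrMr // -!natrM ltr_nat.
lia.
Qed.

Lemma chebyshev_card_ratio (f : T -> R) (a : R) : 16 < a -> (0 < #|A|)%N ->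
  {in A, forall x, 0 <= f x} -> {in A, forall x, ~~ P x -> (a / 2) ^+ 2 <= f x} ->
  \sum_(x in A) f x <= a * #|A|%:R ->
  3 / 4 < #|[set x in A | P x]|%:R / #|A|%:R :> R.
Proof.
move=> a_gt16 A_gt0 f_ge0 f_bad sum_le; apply: ratio_gt3_4.
have := le_trans (markov_card_le f_ge0 f_bad) sum_le.
rewrite -(ltr_nat R) natrM; have : (0 : R) < #|A|%:R by rewrite ltr0n.
set N := #|A|%:R; set b := #|_|%:R => N_gt0 bad_le.
have : b * a <= 4 * N by rewrite -(ler_pM2l (lt_trans _ a_gt16 : 0 < a)) //; nra.
have : 0 <= b by exact: ler0n.
nra.
Qed.

End Counting.

Theorem lemma2 (R : realType) (p n : nat) (F : finFieldType)
    (hprime : prime p) (hn : (1 <= n)%N) (hp : p \in [pchar F])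
    (hcard : #|F| = (p ^ n)%N)
    (g : F -> R) (hg : forall m, 0 <= g m <= 1)
    (k n' : nat) (hk : (2 <= k)%N)
    (hn'lo : 1 + ln ('C(k, 2)%:R : R) / ln (p%:R : R) <= (n'%:R : R))
    (hn'hi : (n'%:R : R) < 2 + ln ('C(k, 2)%:R : R) / ln (p%:R : R))
    (hn'n : (n' <= n)%N) :
  expect g > 8 / (Num.sqrt (p%:R : R) * k%:R) ->
  prob_tW R (Fp_subspaces hp n')
    (fun t W => \sum_(m in translate t W) g m >= expect g * #|W|%:R / 2)
  > 3 / 4.
Proof.
move=> hE; set S := Fp_subspaces hp n'; set q : R := (p ^ n')%:R; set m := expect g.
have qm_gt16 : 16 < q * m.
  apply: (translate_mass_gt16 hprime hk) hE; last exact: expect_le1.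
  by rewrite ler_nat (mul_bin2_leq_expn hprime hk hn'lo).
pose dev (tW : F * {set F}) := (\sum_(w in tW.2) g (tW.1 + w) - q * m) ^+ 2.
set A := setX [set: F] S.
have cardA : #|A| = (#|F| * #|S|)%N by rewrite cardsX cardsT.
have A_gt0 : (0 < #|A|)%N.
  rewrite cardA muln_gt0 (card_Fp_subspaces_gt0 hp hcard hn'n) andbT.
  by apply/card_gt0P; exists 0.
have sum_dev : \sum_(tW in A) dev tW <= q * m * #|A|%:R.
  have -> : \sum_(tW in A) dev tW = \sum_(W in S) \sum_t dev (t, W).
    by rewrite exchange_big pair_big; apply: eq_big => [[t W]|[t W] _] //=; rewrite !inE.
  by rewrite cardA; apply: sum_subspaces_sqr_dev_le.
have bad_dev : {in A, forall tW : F * {set F},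
    ~~ (m * #|tW.2|%:R / 2 <= \sum_(x in translate tW.1 tW.2) g x) ->
    (q * m / 2) ^+ 2 <= dev tW}.
  move=> [t W] /setXP[_ WS]; rewrite -ltNge sum_translate /dev /=.
  by case/Fp_subspacesP: WS => _ _ ->; rewrite -/q => lt_half; nra.
rewrite /prob_tW -cardA.
exact: (chebyshev_card_ratio qm_gt16 A_gt0 (fun tW _ => sqr_ge0 _) bad_dev sum_dev).
Qed.
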